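(* Let $q$ be a prime power, let $n,k$ be integers with $3\le k\le n-2\le q-2$, and let $h=(k-1)+r$ with $1\le r\le k-2$. Let $\alpha_1,\dots,\alpha_n\in\mathbb{F}_q$ be pairwise distinct, let $G_{h,k}$ be the $k\times n$ matrix whose rows are $(\alpha_1^{e},\dots,\alpha_n^{e})$ for $e=0,1,\dots,k-2$ and $e=h$, let $\mathbf v=(v_1,\dots,v_n)\in(\mathbb{F}_q^* )^n$ and let $C_{h,\mathbf v}$ be the linear code generated by $G_{h,k}\cdot\mathrm{diag}(v_1,\dots,v_n)$. Let $u_i=\prod_{j\ne i}(\alpha_i-\alpha_j)^{-1}$ and $S_t=S_t(\alpha_1,\dots,\alpha_n)$. Then $C_{h,\mathbf v}$ is self-orthogonal if and only if there exists a polynomial $f(x)=\sum_{j=0}^{n-2k-r+1}f_jx^j\in\mathbb{F}_q[x]$ such that (1) $v_i^2=u_if(\alpha_i)$ for all $1\le i\le n$, and (2) $\sum_{j=s}^{s+r}f_jS_{j-s}=0$, where $s=n-2k-2r+1$ and $f_j=0$ for $j<0$.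
   Context: Convention: $0^0=1$. $S_t(x_1,\dots,x_m)=\sum_{t_1+\dots+t_m=t,\ t_i\ge0}x_1^{t_1}\cdots x_m^{t_m}$ is the complete homogeneous symmetric polynomial of degree $t$ ($S_0=1$). A linear code $C$ is self-orthogonal if $C\subseteq C^\perp$ (Euclidean dual). *)

From HB Require Import structures.
From mathcomp Require Import all_boot all_order all_algebra.
Set Implicit Arguments. Unset Strict Implicit. Unset Printing Implicit Defensive.
Import Order.TTheory GRing.Theory Num.Theory.
Local Open Scope ring_scope.

Definition complete_hom (F : fieldType) (n : nat) (alpha : 'I_n -> F) (t : nat) : F :=
  \sum_(e : {ffun 'I_n -> 'I_t.+1} | (\sum_(i < n) (e i : nat))%N == t)
     \prod_(i < n) alpha i ^+ e i.

Definition gexp (k h : nat) (i : nat) : nat := if (i < k.-1)%N then i else h.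

Definition Ghv (F : fieldType) (n k h : nat) (alpha v : 'I_n -> F) : 'M[F]_(k, n) :=
  \matrix_(i < k, j < n) (alpha j ^+ gexp k h i * v j).

(* The code generated by M is its row space; self-orthogonal: C \subseteq C^perp
   (Euclidean), i.e. any two codewords have zero Euclidean inner product. *)
Definition self_orthogonal (F : fieldType) (k n : nat) (M : 'M[F]_(k, n)) : Prop :=
  forall x y : 'rV[F]_n, (x <= M)%MS -> (y <= M)%MS -> x *m y^T = 0.

Definition uvec (F : fieldType) (n : nat) (alpha : 'I_n -> F) (i : 'I_n) : F :=
  \prod_(j < n | j != i) (alpha i - alpha j)^-1.

Definition coefz (F : fieldType) (f : {poly F}) (z : int) : F :=
  match z with Posz m => f`_m | Negz _ => 0 end.

From HB Require Import structures.
From mathcomp Require Import all_boot all_order all_algebra.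
From mathcomp Require Import zify ring.
Import Order.TTheory GRing.Theory Num.Theory.
Local Open Scope ring_scope.

(* Write w_i = v_i^2 and P(e) = sum_i w_i alpha_i^e.  The Gram matrix of
   G_{h,k} diag(v) has entries P(e_i + e_j), and the exponent sums e_i + e_j
   are exactly 0, ..., 2k+r-3 and 2h; so self-orthogonality says P(e) = 0 for
   e < 2k+r-2 and P(2h) = 0.
   The key identity is sum_i u_i alpha_i^N = S_{N-n+1} (zero when N < n-1):
   both sides obey the linear recurrence given by the coefficients of
   prod_j (1 - alpha_j x), whose inverse modulo x^(T+1) is the generating
   series of the S_t, and they agree for N < n by Lagrange interpolation.
   Hence, if w_i = u_i f(alpha_i) with deg f < n, then
   P(e) = sum_j f_j S_{j+e-n+1}.  This is triangular in the coefficients of f,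
   so P vanishes below m exactly when deg f < n - m, and P(2h) turns into the
   sum in condition (2). *)

Set Implicit Arguments. Unset Strict Implicit. Unset Printing Implicit Defensive.

Section CongruenceModXn.
Variable R : nzRingType.
Implicit Types p q : {poly R}.

Definition eqmodX (m : nat) p q := forall i, (i < m)%N -> p`_i = q`_i.

Lemma eqmodXM m p p' q q' :
  eqmodX m p p' -> eqmodX m q q' -> eqmodX m (p * q) (p' * q').
Proof.
move=> epp eqq i lt_im; rewrite !coefM; apply: eq_bigr => j _.
have le_ji : (j <= i)%N by rewrite -ltnS.
by rewrite epp ?eqq // (leq_ltn_trans _ lt_im) // leq_subr.
Qed.

Lemma eqmodX_prod m (I : finType) (P Q : I -> {poly R}) :
  (forall i, eqmodX m (P i) (Q i)) -> eqmodX m (\prod_i P i) (\prod_i Q i).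
Proof. by move=> ePQ; apply: (big_ind2 (eqmodX m)) => // *; apply: eqmodXM. Qed.

End CongruenceModXn.

Lemma big_ord_int_shift (V : nmodType) (x : int -> V) (N r : nat) (s : int) :
  (forall z, x z != 0 -> (0 <= z < N%:Z) && (s <= z <= s + r%:Z)) ->
  \sum_(j < N) x j%:Z = \sum_(m < r.+1) x (s + m%:Z).
Proof.
move=> supp; pose d (j m : nat) := if j%:Z == s + m%:Z then x j else 0.
transitivity (\sum_(j < N) \sum_(m < r.+1) d j m).
  apply: eq_bigr => j _; have [xj0 | xj_neq0] := eqVneq (x j) 0.
    by rewrite xj0 big1 // => m _; rewrite /d xj0; case: ifP.
  have /andP[_ /andP[le_sj le_jr]] := supp _ xj_neq0.
  have lt_m : (absz (j%:Z - s)%R < r.+1)%N by lia.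
  rewrite (bigD1 (Ordinal lt_m)) //= big1 => [|m /eqP ne_m].
    by rewrite addr0 /d ifT //; apply/eqP; lia.
  rewrite /d ifF //; apply/negbTE/eqP => eq_j; apply: ne_m; apply: val_inj => /=; lia.
rewrite exchange_big; apply: eq_bigr => m _.
have [xm0 | xm_neq0] := eqVneq (x (s + m%:Z)) 0.
  by rewrite big1 // => j _; rewrite /d; case: eqP => // ->.
have /andP[/andP[le0 ltN] _] := supp _ xm_neq0.
have lt_j : (absz (s + m%:Z)%R < N)%N by lia.
rewrite (bigD1 (Ordinal lt_j)) //= big1 => [|j /eqP ne_j].
  by rewrite addr0 /d ifT; [congr x; lia | apply/eqP; lia].
rewrite /d ifF //; apply/negbTE/eqP => eq_j; apply: ne_j; apply: val_inj => /=; lia.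
Qed.

Section CompleteHomogeneous.
Variables (F : fieldType) (n : nat) (a : 'I_n -> F).

Definition geom (c : F) (T : nat) : {poly F} := \sum_(e < T.+1) (c *: 'X) ^+ e.

Lemma coef_geom c T i : (geom c T)`_i = if (i <= T)%N then c ^+ i else 0.
Proof.
rewrite /geom coef_sum; under eq_bigr => e _ do rewrite exprZn coefZ coefXn.
case: ifPn => [le_iT | lt_Ti]; last first.
  rewrite big1 // => e _; have /negbTE -> : i != e by apply: contraNneq lt_Ti => ->; rewrite -ltnS.
  by rewrite mulr0.
rewrite (bigD1 (Ordinal (le_iT : (i < T.+1)%N))) //= eqxx mulr1 big1 ?addr0 // => e ne_e.
have /negbTE -> : i != e by apply: contraNneq ne_e => eq_ie; apply/eqP/val_inj; rewrite /= eq_ie.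
by rewrite mulr0.
Qed.

Lemma geom_telescope c T : (1 - c *: 'X) * geom c T = 1 - (c *: 'X) ^+ T.+1.
Proof. by rewrite /geom -opprB mulNr -subrX1 opprB. Qed.

Definition hom_series (T : nat) : {poly F} := \prod_(j < n) geom (a j) T.

Definition recip_poly : {poly F} := \prod_(j < n) (1 - a j *: 'X).

Lemma coef_hom_series_diag t : (hom_series t)`_t = complete_hom a t.
Proof.
rewrite /hom_series /geom bigA_distr_bigA coef_sum /complete_hom [RHS]big_mkcond /=.
apply: eq_bigr => e _.
under eq_bigr do rewrite exprZn.
rewrite scaler_prod prodrXr coefZ coefXn eq_sym.
by case: eqP; rewrite ?mulr1 ?mulr0.
Qed.

Lemma coef_hom_series t T : (t <= T)%N -> (hom_series T)`_t = complete_hom a t.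
Proof.
move=> le_tT; rewrite -coef_hom_series_diag.
apply: (eqmodX_prod (m := t.+1)) (ltnSn t) => j i lt_it.
by rewrite ltnS in lt_it; rewrite !coef_geom lt_it (leq_trans lt_it le_tT).
Qed.

Lemma recip_poly_hom_series T : eqmodX T.+1 (recip_poly * hom_series T) 1.
Proof.
have -> : 1 = \prod_(j < n) (1 : {poly F}) by rewrite big1_eq.
rewrite /recip_poly /hom_series -big_split /=; apply: eqmodX_prod => j i lt_iT.
by rewrite geom_telescope coefB exprZn coefZ coefXn ltn_eqF // mulr0 subr0.
Qed.

Lemma size_prod_1subZX (I : finType) (P : pred I) (c : I -> F) :
  (size (\prod_(i | P i) (1 - c i *: 'X))%R <= #|P|.+1)%N.
Proof.
have coef_1subZX i j : (1 - c i *: 'X : {poly F})`_j = (j == 0)%:R - c i * (j == 1)%:R.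
  by rewrite coefB coef1 coefZ coefX.
rewrite size_prod => [|i _]; last first.
  by apply/eqP => /(congr1 (coefp 0)) /eqP; rewrite /= coef_1subZX mulr0 subr0 coef0 oner_eq0.
rewrite leq_subLR addnS ltnS addnn -muln2 -sum_nat_const.
apply: leq_sum => i _; apply/leq_sizeP => -[|[|j]] //= _.
by rewrite coef_1subZX mulr0 subr0.
Qed.

Definition complete_homz (t : int) : F :=
  match t with Posz t => complete_hom a t | Negz _ => 0 end.

Lemma complete_homzE (i j : nat) :
  complete_homz (i%:Z - j%:Z) = if (j <= i)%N then complete_hom a (i - j) else 0.
Proof.
case: leqP => [le_ji | lt_ij]; first by rewrite subzn.
by have -> : i%:Z - j%:Z = Negz (j - i).-1 by lia.
Qed.

Lemma complete_hom0 : complete_hom a 0 = 1.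
Proof.
rewrite -coef_hom_series_diag /hom_series /geom.
by under eq_bigr do rewrite big_ord1 expr0; rewrite big1_eq coef1.
Qed.

Lemma recip_poly_complete_hom t :
  (0 < t)%N -> \sum_(i < t.+1) recip_poly`_i * complete_hom a (t - i) = 0.
Proof.
move=> t_gt0; have := recip_poly_hom_series (ltnSn t).
rewrite coefM coef1 gtn_eqF // mulr0n => sum_eq0.
rewrite -[RHS]sum_eq0; apply: eq_bigr => i _.
by rewrite coef_hom_series // leq_subr.
Qed.

Lemma coef0_recip_poly : recip_poly`_0 = 1.
Proof.
rewrite coef0_prod big1 // => j _.
by rewrite coefB coef1 coefZ coefX mulr0 subr0.
Qed.

Lemma recip_poly_power_sum (w : 'I_n -> F) c : (n <= c)%N ->
  \sum_(i < c.+1) recip_poly`_i * (\sum_(l < n) w l * a l ^+ (c - i)) = 0.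
Proof.
move=> le_nc; under eq_bigr do rewrite mulr_sumr.
rewrite exchange_big /=; apply: big1 => l _.
set E_l := \prod_(j < n | j != l) (1 - a j *: 'X).
have recipE : recip_poly = (1 - a l *: 'X) * E_l by rewrite /recip_poly (bigD1 l).
have size_E_l : (size E_l <= n)%N.
  apply: leq_trans (size_prod_1subZX _ _) _.
  by rewrite cardC1 card_ord prednK // (leq_ltn_trans _ (ltn_ord l)).
transitivity (w l * (recip_poly * geom (a l) c)`_c).
  rewrite coefM mulr_sumr; apply: eq_bigr => i _.
  by rewrite coef_geom leq_subr mulrCA.
rewrite recipE mulrAC geom_telescope mulrBl mul1r coefB exprZn -scalerAl coefZ coefXnM ltnSn.
by rewrite mulr0 subr0 nth_default ?mulr0 // (leq_trans size_E_l).
Qed.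

Lemma complete_homz_recurrence c : (0 < n)%N -> (n <= c)%N ->
  \sum_(i < c.+1) recip_poly`_i * complete_homz ((c - i).+1%:Z - n%:Z) = 0.
Proof.
move=> n_gt0 le_nc; set t := (c.+1 - n)%N.
have t_gt0 : (0 < t)%N by rewrite subn_gt0.
rewrite -[RHS](recip_poly_complete_hom t_gt0).
rewrite (big_ord_widen c.+1 (fun i => recip_poly`_i * complete_hom a (t - i))); last first.
  by rewrite /t; lia.
rewrite [RHS]big_mkcond /=; apply: eq_bigr => i _; rewrite complete_homzE.
have le_ic : (i <= c)%N by rewrite -ltnS.
have -> : (n <= (c - i).+1)%N = (i < t.+1)%N by rewrite /t; lia.
by case: ifP => [_|_]; rewrite ?mulr0 // /t; congr (_ * complete_hom _ _); lia.
Qed.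

End CompleteHomogeneous.

Section LagrangeNodes.
Variables (F : fieldType) (n : nat) (a : 'I_n -> F).
Hypothesis a_inj : injective a.

Definition lagrange_num (l : 'I_n) : {poly F} := \prod_(j < n | j != l) ('X - (a j)%:P).

Lemma uvec_neq0 l : uvec a l != 0.
Proof.
rewrite /uvec prodfV invr_eq0; apply/prodf_neq0 => j ne_jl.
by rewrite subr_eq0 (inj_eq a_inj) eq_sym.
Qed.

Lemma horner_lagrange_num l i :
  (lagrange_num l).[a i] = if i == l then (uvec a l)^-1 else 0.
Proof.
rewrite /lagrange_num horner_prod; under eq_bigr do rewrite hornerXsubC.
case: eqP => [-> | /eqP ne_il]; first by rewrite /uvec prodfV invrK.
by rewrite (bigD1 i) //= subrr mul0r.
Qed.

Lemma size_lagrange_num l : size (lagrange_num l) = n.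
Proof.
rewrite /lagrange_num -big_filter size_prod_XsubC.
have [_ _ _ [_ ->]] := big_enumP (fun j : 'I_n => j != l).
by rewrite cardC1 card_ord prednK // (leq_ltn_trans _ (ltn_ord l)).
Qed.

Lemma coef_lagrange_num_top l : (lagrange_num l)`_n.-1 = 1.
Proof.
have := monic_prod_XsubC (index_enum 'I_n) (fun j => j != l) a.
by rewrite monicE lead_coefE -/(lagrange_num l) size_lagrange_num => /eqP.
Qed.

Lemma lagrange_interp (p : {poly F}) : (size p <= n)%N ->
  p = \sum_(l < n) (uvec a l * p.[a l]) *: lagrange_num l.
Proof.
move=> size_p; apply/eqP; rewrite -subr_eq0; apply/eqP.
apply: (roots_geq_poly_eq0 (rs := map a (enum 'I_n))).
- apply/allP => _ /mapP[i _ ->]; rewrite /root hornerD hornerN horner_sum.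
  rewrite (bigD1 i) //= big1 => [|l ne_li]; last first.
    by rewrite hornerZ horner_lagrange_num eq_sym (negbTE ne_li) mulr0.
  by rewrite hornerZ horner_lagrange_num eqxx addr0 mulrAC divff ?uvec_neq0 // mul1r subrr.
- by rewrite map_inj_uniq ?enum_uniq.
- rewrite size_map size_enum_ord; apply: leq_trans (size_polyD _ _) _.
  rewrite geq_max size_p size_polyN; apply/leq_sizeP => j le_nj.
  rewrite coef_sum big1 // => l _; by rewrite coefZ nth_default ?mulr0 // size_lagrange_num.
Qed.

Lemma sum_uvec_horner (p : {poly F}) : (size p <= n)%N ->
  \sum_(l < n) uvec a l * p.[a l] = p`_n.-1.
Proof.
move=> size_p; rewrite [in RHS](lagrange_interp size_p) coef_sum.
by apply: eq_bigr => l _; rewrite coefZ coef_lagrange_num_top mulr1.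
Qed.

End LagrangeNodes.

Section UvecMoments.
Variables (F : fieldType) (n : nat) (a : 'I_n -> F).
Hypothesis a_inj : injective a.
Hypothesis n_gt0 : (0 < n)%N.

Lemma sum_uvec_exp N :
  \sum_(l < n) uvec a l * a l ^+ N = complete_homz a (N.+1%:Z - n%:Z).
Proof.
elim/ltn_ind: N => N IH; rewrite complete_homzE.
have [lt_Nn | le_nN] := ltnP N n.
  have size_XN : (size ('X^N : {poly F}) <= n)%N by rewrite size_polyXn.
  have := sum_uvec_horner a_inj size_XN.
  under eq_bigr do rewrite hornerXn.
  move=> ->; rewrite coefXn; case: ifP => [le_nN1 | lt_N1n].
    have -> : (n.-1 == N) by lia.
    have -> : (N.+1 - n = 0)%N by lia.
    by rewrite complete_hom0.
  by have -> : (n.-1 == N) = false by lia.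
have := recip_poly_power_sum a (uvec a) le_nN.
have := complete_homz_recurrence a n_gt0 le_nN.
rewrite !big_ord_recl !subn0 coef0_recip_poly !mul1r complete_homzE ifT 1?ltnW //.
move/eqP; rewrite addr_eq0 => /eqP ->; move/eqP; rewrite addr_eq0 => /eqP ->.
by congr (- _); apply: eq_bigr => i _; rewrite IH // lift0; lia.
Qed.

Lemma sum_uvec_horner_exp (f : {poly F}) e : (size f <= n)%N ->
  \sum_(l < n) uvec a l * f.[a l] * a l ^+ e =
  \sum_(j < n) f`_j * complete_homz a ((j + e).+1%:Z - n%:Z).
Proof.
move=> size_f.
under eq_bigr => l _ do rewrite (horner_coef_wide _ size_f) mulr_sumr mulr_suml.
rewrite exchange_big /=; apply: eq_bigr => j _.
by rewrite -sum_uvec_exp mulr_sumr; apply: eq_bigr => l _; rewrite exprD; ring.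
Qed.

Lemma moments_vanish_of_size (f : {poly F}) m : (size f <= n - m)%N ->
  forall e, (e < m)%N -> \sum_(l < n) uvec a l * f.[a l] * a l ^+ e = 0.
Proof.
move=> size_f e lt_em; rewrite sum_uvec_horner_exp ?(leq_trans size_f (leq_subr _ _)) //.
apply: big1 => j _; have [lt_jf | le_fj] := ltnP j (size f); last by rewrite nth_default ?mul0r.
by rewrite complete_homzE ifF ?mulr0 //; lia.
Qed.

Lemma size_of_moments_vanish (f : {poly F}) m : (size f <= n)%N ->
  (forall e, (e < m)%N -> \sum_(l < n) uvec a l * f.[a l] * a l ^+ e = 0) ->
  (size f <= n - m)%N.
Proof.
elim: m => [|m IH] size_f vanish; first by rewrite subn0.
have {IH} size_f' := IH size_f (fun e lt_em => vanish e (ltnW lt_em)).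
have [le_nm | lt_mn] := leqP n m; first by have -> : (n - m.+1 = n - m)%N by lia.
apply/leq_sizeP => j le_j.
have [lt_j | le_j'] := ltnP j (n - m); last exact: (leq_sizeP _ _ size_f').
have -> : j = (n - m.+1)%N by lia.
have lt_top : (n - m.+1 < n)%N by lia.
have := vanish m (ltnSn m); rewrite sum_uvec_horner_exp // (bigD1 (Ordinal lt_top)) //=.
have -> : ((n - m.+1 + m).+1%:Z - n%:Z) = 0%N%:Z by lia.
rewrite /= complete_hom0 mulr1 big1 ?addr0 // => i /eqP ne_i.
have [lt_i | le_i] := ltnP i (n - m); last by rewrite nth_default ?mul0r // (leq_trans size_f').
have ne_i' : (i : nat) <> (n - m.+1)%N by move=> eq_i; apply: ne_i; apply: val_inj.
by rewrite complete_homzE ifF ?mulr0 //; lia.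
Qed.

Lemma moments_vanishP (w : 'I_n -> F) m :
  (forall e, (e < m)%N -> \sum_(l < n) w l * a l ^+ e = 0) <->
  exists f : {poly F}, (size f <= n - m)%N /\ forall l, w l = uvec a l * f.[a l].
Proof.
split=> [vanish | [f [size_f wE]] e lt_em]; last first.
  by under eq_bigr do rewrite wE; exact: moments_vanish_of_size size_f e lt_em.
pose f := \sum_(l < n) w l *: lagrange_num a l.
have wE l : w l = uvec a l * f.[a l].
  rewrite horner_sum (bigD1 l) //= big1 => [|j ne_jl]; last first.
    by rewrite hornerZ horner_lagrange_num // eq_sym (negbTE ne_jl) mulr0.
  by rewrite hornerZ horner_lagrange_num // eqxx addr0 mulrCA divff ?mulr1 ?uvec_neq0.
exists f; split => //; apply: size_of_moments_vanish.
  apply/leq_sizeP => j le_nj; rewrite coef_sum big1 // => l _.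
  by rewrite coefZ nth_default ?mulr0 // size_lagrange_num.
by move=> e lt_em; under eq_bigr do rewrite -wE; exact: vanish.
Qed.

Lemma sum_uvec_horner_exp_window (f : {poly F}) e r :
  (size f <= n)%N -> ((size f)%:Z <= n%:Z - e%:Z + r%:Z) ->
  \sum_(l < n) uvec a l * f.[a l] * a l ^+ e =
  \sum_(m < r.+1) coefz f (n%:Z - e%:Z - 1 + m%:Z) * complete_hom a m.
Proof.
move=> size_f size_fz; rewrite sum_uvec_horner_exp //.
set s := n%:Z - e%:Z - 1.
pose x z := coefz f z * complete_homz a (z - s).
transitivity (\sum_(j < n) x j).
  by apply: eq_bigr => j _; rewrite /x /s; congr (_ * complete_homz _ _); lia.
rewrite (big_ord_int_shift (s := s) (r := r)) => [|z].
  by apply: eq_bigr => m _; rewrite /x (_ : s + m%:Z - s = m%:Z) //; lia.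
rewrite /x mulf_eq0 negb_or; case: z => [j|j] /andP[fj Sj]; last by rewrite /= eqxx in fj.
have lt_jf : (j < size f)%N by case: (ltnP j (size f)) fj => //= le_fj; rewrite nth_default ?eqxx.
have le_sj : s <= j%:Z.
  move: Sj; case E: (j%:Z - s) => [d|d] /=; last by rewrite eqxx.
  by move=> _; rewrite /s in E *; lia.
rewrite /s in le_sj *; lia.
Qed.

End UvecMoments.

Lemma self_orthogonalE (F : fieldType) k n (M : 'M[F]_(k, n)) :
  self_orthogonal M <-> M *m M^T = 0.
Proof.
split=> [so | MMt0 x y /submxP[D ->] /submxP[E ->]]; last first.
  by rewrite trmx_mul mulmxA -(mulmxA D) MMt0 mulmx0 mul0mx.
apply/matrixP => i j; have := so _ _ (row_sub i M) (row_sub j M).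
move/matrixP/(_ 0 0); rewrite !mxE => row_ij0.
by rewrite -[RHS]row_ij0; apply: eq_bigr => l _; rewrite !mxE.
Qed.

Lemma gexp_addE k r e : (r + 2 <= k)%N ->
  (exists i j : 'I_k, (gexp k (k.-1 + r) i + gexp k (k.-1 + r) j)%N = e) <->
  (e < 2 * k + r - 2)%N \/ e = (2 * (k.-1 + r))%N.
Proof.
rewrite /gexp => le_rk; have lt_k1k : (k.-1 < k)%N by lia.
split=> [[i [j <-]] | [lt_e | ->]].
- by have := ltn_ord i; have := ltn_ord j; do 2 case: ifP => ?; lia.
- have [le_he | lt_eh] := leqP (k.-1 + r) e.
    have lt_j : (e - (k.-1 + r) < k)%N by lia.
    by exists (Ordinal lt_k1k), (Ordinal lt_j); rewrite /= ltnn ifT; lia.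
  have lt_i : (minn e (k - 2) < k)%N by lia.
  have lt_j : (e - minn e (k - 2) < k)%N by lia.
  by exists (Ordinal lt_i), (Ordinal lt_j); rewrite /= !ifT; lia.
- by exists (Ordinal lt_k1k), (Ordinal lt_k1k); rewrite /= ltnn; lia.
Qed.

Lemma self_orthogonal_Ghv (F : fieldType) n k r (alpha v : 'I_n -> F) :
  (r + 2 <= k)%N ->
  self_orthogonal (@Ghv F n k (k.-1 + r) alpha v) <->
  (forall e, (e < 2 * k + r - 2)%N -> \sum_(l < n) v l ^+ 2 * alpha l ^+ e = 0) /\
  \sum_(l < n) v l ^+ 2 * alpha l ^+ (2 * (k.-1 + r)) = 0.
Proof.
move=> le_rk; set G := Ghv _ _ _ _; rewrite self_orthogonalE -matrixP.
have GGtE i j : (G *m G^T) i j =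
    \sum_(l < n) v l ^+ 2 * alpha l ^+ (gexp k (k.-1 + r) i + gexp k (k.-1 + r) j).
  by rewrite !mxE; apply: eq_bigr => l _; rewrite !mxE exprD; ring.
split=> [GGt0 | [low top] i j]; last first.
  rewrite GGtE mxE.
  by have [/low | ->] := (gexp_addE _ le_rk).1 (ex_intro _ i (ex_intro _ j erefl)).
split=> [e lt_e | ].
  by have [i [j <-]] := (gexp_addE e le_rk).2 (or_introl lt_e); rewrite -GGtE GGt0 mxE.
by have [i [j <-]] := (gexp_addE _ le_rk).2 (or_intror erefl); rewrite -GGtE GGt0 mxE.
Qed.

Theorem theorem4p11 (F : finFieldType) (n k r : nat)
  (alpha v : 'I_n -> F)
  (hk3 : (3 <= k)%N) (hkn : (k + 2 <= n)%N) (hnq : (n <= #|F|)%N)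
  (hr1 : (1 <= r)%N) (hr2 : (r + 2 <= k)%N)
  (halpha : injective alpha) (hv : forall i, v i != 0) :
  let h := (k.-1 + r)%N in
  let s : int := (n%:Z - 2 * k%:Z - 2 * r%:Z + 1)%R in
  self_orthogonal (@Ghv F n k h alpha v)
  <->
  exists f : {poly F},
    ((size f)%:Z <= n%:Z - 2 * k%:Z - r%:Z + 2)%R /\
    (forall i : 'I_n, v i ^+ 2 = uvec alpha i * f.[alpha i]) /\
    \sum_(m < r.+1) coefz f (s + m%:Z)%R * complete_hom alpha m = 0.
Proof.
move=> h s; have n_gt0 : (0 < n)%N by lia.
have sE : s = n%:Z - (2 * h)%N%:Z - 1 by rewrite /s /h; lia.
have top_window (f : {poly F}) : (size f <= n)%N ->
    ((size f)%:Z <= n%:Z - 2 * k%:Z - r%:Z + 2) ->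
    \sum_(l < n) uvec alpha l * f.[alpha l] * alpha l ^+ (2 * h) =
    \sum_(m < r.+1) coefz f (s + m%:Z) * complete_hom alpha m.
  move=> size_f size_fz; rewrite sE (sum_uvec_horner_exp_window halpha n_gt0 (r := r)) //.
  by apply: le_trans size_fz _; rewrite /h; lia.
rewrite self_orthogonal_Ghv // (moments_vanishP halpha n_gt0 (fun l => v l ^+ 2)).
split=> [[[f [size_f vE]] top] | [f [size_fz [vE top]]]].
- have le_mn : (2 * k + r - 2 <= n)%N.
    rewrite leqNgt; apply/negP => lt_nm; have := vE (Ordinal n_gt0).
    have /eqP -> : f == 0 by rewrite -size_poly_eq0 -leqn0 (leq_trans size_f) //; lia.
    by rewrite horner0 mulr0 => /eqP; rewrite expf_eq0 /= (negbTE (hv _)).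
  have size_fz : (size f)%:Z <= n%:Z - 2 * k%:Z - r%:Z + 2 by lia.
  exists f; split=> //; split=> //; rewrite -top_window ?(leq_trans size_f) ?leq_subr //.
  by rewrite -[RHS]top; apply: eq_bigr => l _; rewrite vE.
- have size_f : (size f <= n - (2 * k + r - 2))%N by lia.
  split; first by exists f.
  rewrite -[RHS]top -top_window ?(leq_trans size_f) ?leq_subr //.
  by apply: eq_bigr => l _; rewrite vE.
Qed.
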